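(* Let $W,V$ be subspaces of $\mathbb{R}^n$ with $\mathbb{R}^n=W\oplus V^\perp$, and let $\mu\in\mathcal{P}_2(W)$ be a probabilistic frame for $W$ with frame operator $\mathbf{S}_\mu$. A measurable map $T:W\to V$ is such that $T_\#\mu$ is an oblique dual probabilistic frame of $\mu$ on $V$ with respect to the coupling $(\mathbf{Id},T)_\#\mu$ if and only if there is a measurable map $h:W\to V$ with $h_\#\mu\in\mathcal{P}_2(V)$ and $\int_W\mathbf{x}\,h(\mathbf{x})^t\,d\mu(\mathbf{x})=\mathbf{0}_{n\times n}$ such that for all $\mathbf{x}\in W$, $$T(\mathbf{x})=\boldsymbol{\pi}_{VW^\perp}\mathbf{S}_\mu^\dagger\mathbf{x}+h(\mathbf{x}).$$
   Context: $\mathcal{P}_2(S)$ denotes Borel probability measures on $\mathbb{R}^n$ concentrated on the subspace $S$ with finite second moment. $\mu\in\mathcal{P}_2(W)$ is a probabilistic frame for $W$ if there exist $0<A\le B<\infty$ with $A\|\mathbf{x}\|^2\le\int_W|\langle\mathbf{x},\mathbf{y}\rangle|^2d\mu(\mathbf{y})\le B\|\mathbf{x}\|^2$ for all $\mathbf{x}\in W$; its frame operator is $\mathbf{S}_\mu=\int_W\mathbf{y}\mathbf{y}^td\mu(\mathbf{y})$, with Moore–Penrose inverse $\mathbf{S}_\mu^\dagger$. $(\mathbf{Id},T)_\#\mu$ is the pushforward of $\mu$ under $\mathbf{x}\mapsto(\mathbf{x},T(\mathbf{x}))$. $\boldsymbol{\pi}_{WV^\perp}$ is the oblique projection onto $W$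 along $V^\perp$ and $\boldsymbol{\pi}_{VW^\perp}$ the oblique projection onto $V$ along $W^\perp$. $\nu\in\mathcal{P}_2(V)$ is an oblique dual probabilistic frame of $\mu$ on $V$ with respect to a coupling $\gamma$ of $\mu$ and $\nu$ if $\int_{W\times V}\mathbf{x}\mathbf{y}^t\,d\gamma(\mathbf{x},\mathbf{y})=\boldsymbol{\pi}_{WV^\perp}$. *)

(* mathcomp 2.5 + mathcomp-analysis 1.16.
   Conventions:
   - R^n is modelled by column vectors 'cV[R]_n, equipped with the Borel
     sigma-algebra (generated by the open sets of the matrix topology).
   - A linear subspace S of R^n is represented by a square matrix
     S : 'M[R]_n whose ROW SPACE is S (mathcomp's mxalgebra convention);
     a column vector x lies in S iff (x^T <= S)%MS.
   - Matrices act on column vectors from the left (x |-> A *m x). *)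
From HB Require Import structures.
From mathcomp Require Import all_boot all_order all_algebra.
From mathcomp Require Import all_classical all_reals all_analysis.
Set Implicit Arguments.
Unset Strict Implicit.
Unset Printing Implicit Defensive.
Import Order.TTheory GRing.Theory Num.Theory numFieldNormedType.Exports.
Local Open Scope classical_set_scope.
Local Open Scope ring_scope.

Definition Rn (R : realType) (n : nat) :=
  g_sigma_algebraType (open : set (set 'cV[R]_n)).

Definition inS (R : realType) (n : nat) (S : 'M[R]_n) (x : 'cV[R]_n) : bool :=
  (x^T <= S)%MS.

Definition perp (R : realType) (n : nat) (S : 'M[R]_n) : 'M[R]_n := kermx S^T.

Definition dotv (R : realType) (n : nat) (x y : 'cV[R]_n) : R :=
  \sum_i x i ord0 * y i ord0.
Definition sqnorm (R : realType) (n : nat) (x : 'cV[R]_n) : R := dotv x x.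

Definition mx_integral d (X : measurableType d) (R : realType) (p q : nat)
  (mu : {measure set X -> \bar R}) (F : X -> 'M[R]_(p, q)) : 'M[R]_(p, q) :=
  \matrix_(i, j) Rintegral mu setT (fun x => F x i j).

Definition P2 (R : realType) (n : nat) (S : 'M[R]_n)
  (mu : {measure set Rn R n -> \bar R}) : Prop :=
  [/\ mu setT = 1%E,
      mu [set x : Rn R n | ~~ inS S x] = 0%E &
      (\int[mu]_x (sqnorm x)%:E < +oo)%E].

Definition prob_frame (R : realType) (n : nat) (S : 'M[R]_n)
  (mu : {measure set Rn R n -> \bar R}) : Prop :=
  exists A B : R, [/\ 0 < A, A <= B &
    forall x : 'cV[R]_n, inS S x ->
      ((A * sqnorm x)%:E <= \int[mu]_y ((dotv x y) ^+ 2)%:E)%E /\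
      (\int[mu]_y ((dotv x y) ^+ 2)%:E <= (B * sqnorm x)%:E)%E].

Definition frame_op (R : realType) (n : nat)
  (mu : {measure set Rn R n -> \bar R}) : 'M[R]_n :=
  mx_integral mu (fun y : Rn R n => (y : 'cV[R]_n) *m (y : 'cV[R]_n)^T).

Definition is_MP_inverse (R : realType) (n : nat) (A X : 'M[R]_n) : Prop :=
  [/\ A *m X *m A = A, X *m A *m X = X, (A *m X)^T = A *m X &
      (X *m A)^T = X *m A].
Definition mp_inv (R : realType) (n : nat) (A : 'M[R]_n) : 'M[R]_n :=
  xget 0 [set X | is_MP_inverse A X].

(* oblique projection onto S along U (for R^n = S (+) U), acting on column
   vectors; proj_mx acts on row vectors, hence the transpose *)
Definition oproj (R : realType) (n : nat) (S U : 'M[R]_n) : 'M[R]_n :=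
  (proj_mx S U)^T.

Definition is_coupling (R : realType) (n : nat)
  (mu nu : {measure set Rn R n -> \bar R})
  (gam : {measure set (Rn R n * Rn R n) -> \bar R}) : Prop :=
  forall A : set (Rn R n), measurable A ->
    gam (A `*` setT) = mu A /\ gam (setT `*` A) = nu A.

Definition oblique_dual (R : realType) (n : nat) (W V : 'M[R]_n)
  (mu nu : {measure set Rn R n -> \bar R})
  (gam : {measure set (Rn R n * Rn R n) -> \bar R}) : Prop :=
  [/\ P2 V nu, is_coupling mu nu gam &
      mx_integral gam (fun p => (p.1 : 'cV[R]_n) *m (p.2 : 'cV[R]_n)^T)
        = oproj W (perp V)].

Definition graph_map d d' (X : measurableType d) (Y : measurableType d')
  (f : {mfun X >-> Y}) : X -> X * Y := fun x => (x, f x).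

HB.instance Definition _ d d' (X : measurableType d) (Y : measurableType d')
  (f : {mfun X >-> Y}) :=
  isMeasurableFun.Build _ _ X (X * Y)%type (graph_map f)
    (measurable_fun_pair (@measurable_id _ X setT) (@measurable_funPT _ _ _ _ f)).

(* the pushforward (image) measure f_# mu, i.e. the library's
   [pushforward mu f] (A |-> mu (f^-1 A)) packaged as a measure using the
   measurability of f *)
Definition push d d' (X : measurableType d) (Y : measurableType d')
  (R : realType) (mu : {measure set X -> \bar R}) (f : {mfun X >-> Y})
  : {measure set Y -> \bar R} :=
  @measure_function_pushforward__canonical__measure_function_Measure
    _ _ X Y R mu f (@measurable_funPT _ _ _ _ f).

Lemma pushE d d' (X : measurableType d) (Y : measurableType d')
  (R : realType) (mu : {measure set X -> \bar R}) (f : {mfun X >-> Y})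
  (A : set Y) : push mu f A = pushforward mu f A.
Proof. by []. Qed.

From HB Require Import structures.
From mathcomp Require Import all_boot all_order all_algebra.
From mathcomp Require Import all_classical all_reals all_analysis.
From mathcomp Require Import zify ring lra measurable_realfun.
Import Order.TTheory GRing.Theory Num.Theory numFieldNormedType.Exports.
Local Open Scope classical_set_scope.
Local Open Scope ring_scope.
Set Implicit Arguments. Unset Strict Implicit. Unset Printing Implicit Defensive.

(* Write S for the frame operator of mu and A := pi_{VW^perp} S^+.  Since mu
   lives on W and is a frame for W, S is symmetric with row space exactly W.
   The Penrose equations and pi_{VW^perp}^T = pi_{WV^perp} (which is where
   R^n = W (+) V^perp is used) give S A^T = pi_{WV^perp}, that is
   \int x (A x)^T dmu = pi_{WV^perp}.  For the coupling (Id, T)_# mu, duality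
   reads \int x T(x)^T dmu = pi_{WV^perp}, so it holds exactly when h := T - A
   satisfies \int x h(x)^T dmu = 0; since A is linear, T and h are square
   integrable together. *)

Section Gram.
Variable R : realFieldType.

Lemma mulmx_tr_self_eq0 (p : nat) (v : 'rV[R]_p) : v *m v^T = 0 -> v = 0.
Proof.
move=> /(congr1 (fun M : 'M[R]_1 => M 0 0)); rewrite !mxE => vv0.
have sq0 : forall j, true -> v 0 j * v^T j 0 = 0.
  by apply: psumr_eq0P vv0 => k _; rewrite mxE -expr2 sqr_ge0.
by apply/rowP => j; move/eqP: (sq0 j isT); rewrite !mxE mulf_eq0 orbb => /eqP.
Qed.

Lemma row_free_gram_unitmx (r p : nat) (K : 'M[R]_(r, p)) :
  row_free K -> K *m K^T \in unitmx.
Proof.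
move=> freeK; rewrite -row_free_unit -kermx_eq0 -submx0; apply/row_subP => i.
have /sub_kermxP uK : (row i (kermx (K *m K^T)) <= kermx (K *m K^T))%MS.
  exact: row_sub.
set u := row i _ in uK *.
have : u *m K = 0.
  by apply: mulmx_tr_self_eq0; rewrite trmx_mul !mulmxA -(mulmxA u K) uK mul0mx.
by move/eqP; rewrite mulmx_free_eq0 // => /eqP ->; rewrite sub0mx.
Qed.

End Gram.

Section LinearAlgebra.
Variable R : realType.

Lemma is_MP_inverse_factor (n r : nat) (B : 'M[R]_(n, r)) (C : 'M[R]_(r, n)) :
  B^T *m B \in unitmx -> C *m C^T \in unitmx ->
  is_MP_inverse (B *m C) (C^T *m invmx (C *m C^T) *m invmx (B^T *m B) *m B^T).
Proof.
move=> uB uC.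
set G1 := invmx (B^T *m B); set G2 := invmx (C *m C^T).
have G1K : G1 *m (B^T *m B) = 1%:M by rewrite mulVmx.
have G2K : C *m C^T *m G2 = 1%:M by rewrite mulmxV.
have G2K' : G2 *m (C *m C^T) = 1%:M by rewrite mulVmx.
have G1sym : G1^T = G1 by rewrite /G1 trmx_inv trmx_mul trmxK.
have G2sym : G2^T = G2 by rewrite /G2 trmx_inv trmx_mul trmxK.
have AX : B *m C *m (C^T *m G2 *m G1 *m B^T) = B *m G1 *m B^T.
  by rewrite !mulmxA -(mulmxA B C) -(mulmxA B) G2K mulmx1.
have XA : C^T *m G2 *m G1 *m B^T *m (B *m C) = C^T *m G2 *m C.
  by rewrite !mulmxA -!(mulmxA _ B^T B) -(mulmxA _ G1) G1K mulmx1.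
split.
- by rewrite AX !mulmxA -(mulmxA _ B^T B) -(mulmxA _ G1 (B^T *m B)) G1K mulmx1.
- by rewrite XA !mulmxA -(mulmxA _ C C^T) -(mulmxA _ G2 (C *m C^T)) G2K' mulmx1.
- by rewrite AX !trmx_mul trmxK G1sym mulmxA.
- by rewrite XA !trmx_mul trmxK G2sym mulmxA.
Qed.

Lemma mp_invP (n : nat) (S : 'M[R]_n) : is_MP_inverse S (mp_inv S).
Proof.
have uB : (col_base S)^T *m (col_base S)^T^T \in unitmx.
  apply: row_free_gram_unitmx; rewrite /row_free mxrank_tr.
  exact: col_base_full.
have uC : row_base S *m (row_base S)^T \in unitmx.
  exact/row_free_gram_unitmx/row_base_free.
rewrite trmxK in uB.
have := is_MP_inverse_factor uB uC; rewrite mulmx_base => MP.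
by rewrite /mp_inv; case: xgetP => // /(_ _ MP).
Qed.

Lemma orthogonal_submx (m p k n : nat) (a : 'M[R]_(m, n)) (X : 'M[R]_(k, n))
    (b : 'M[R]_(p, n)) :
  (a <= X)%MS -> b *m X^T = 0 -> a *m b^T = 0.
Proof.
case/submxP => D -> bX.
by rewrite -mulmxA -[X *m b^T]trmxK trmx_mul trmxK bX trmx0 mulmx0.
Qed.

Lemma sub_perp (m n : nat) (V : 'M[R]_n) (u : 'M[R]_(m, n)) :
  (u <= perp V)%MS = (u *m V^T == 0).
Proof. by rewrite /perp sub_kermx. Qed.

Lemma mulmx_perp_tr (n : nat) (V : 'M[R]_n) : perp V *m V^T = 0.
Proof. by apply/eqP; rewrite -sub_perp. Qed.

Lemma mxrank_perp (n : nat) (V : 'M[R]_n) : \rank (perp V) = (n - \rank V)%N.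
Proof. by rewrite /perp mxrank_ker mxrank_tr. Qed.

Lemma row_capmx_eq0 (n : nat) (A B : 'M[R]_n) :
  (forall u : 'rV[R]_n, (u <= A)%MS -> (u <= B)%MS -> u = 0) -> (A :&: B = 0)%MS.
Proof.
move=> AB0; apply/eqP; rewrite -submx0; apply/row_subP => i; rewrite submx0.
apply/eqP/AB0; apply: submx_trans (row_sub i _) _.
  exact: capmxSl.
exact: capmxSr.
Qed.

Section Complements.
Variables (n : nat) (W V : 'M[R]_n).
Hypotheses (WVfull : (W + perp V == 1%:M)%MS) (WVdirect : mxdirect (W + perp V)).

Lemma perp_capmx0 : (V :&: perp W = 0)%MS.
Proof.
apply: row_capmx_eq0 => // u uV uW; apply: mulmx_tr_self_eq0.
have /sub_addsmxP [x ux] : (u <= W + perp V)%MS by rewrite (eqmxP WVfull) submx1.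
rewrite [in X in _ *m X]ux linearD /= mulmxDr.
rewrite [(x.1 *m _)^T]trmx_mul [(x.2 *m _)^T]trmx_mul !mulmxA.
move: uW; rewrite sub_perp => /eqP ->.
by rewrite (orthogonal_submx uV (mulmx_perp_tr V)) !mul0mx addr0.
Qed.

Lemma perp_addsmx1 : (V + perp W == 1%:M)%MS.
Proof.
have rk : (\rank W + (n - \rank V))%N = n.
  move/mxdirect_addsP: WVdirect => /mxrank_disjoint_sum.
  by rewrite mxrank_perp (eqmxP WVfull) mxrank1.
have := rank_leq_col V; have := rank_leq_col W.
rewrite sub1mx /row_full mxrank_disjoint_sum ?perp_capmx0 // mxrank_perp submx1.
lia.
Qed.

Lemma trmx_proj_perp : (proj_mx V (perp W))^T = proj_mx W (perp V).
Proof.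
have WV0 : (W :&: perp V = 0)%MS by apply/mxdirect_addsP.
set P := proj_mx W (perp V); set Q := proj_mx V (perp W).
have PP' : P + proj_mx (perp V) W = 1%:M.
  by have := add_proj_mx WV0 (andP WVfull).2; rewrite !mul1mx.
have QQ' : Q + proj_mx (perp W) V = 1%:M.
  by have := add_proj_mx perp_capmx0 (andP perp_addsmx1).2; rewrite !mul1mx.
have PW : (P <= W)%MS by rewrite -[P]mul1mx proj_mx_sub.
have QV : (Q <= V)%MS by rewrite -[Q]mul1mx proj_mx_sub.
have Q'perp : proj_mx (perp W) V *m W^T = 0.
  by apply/eqP; rewrite -sub_perp -[proj_mx _ _]mul1mx proj_mx_sub.
have P'perp : proj_mx (perp V) W *m V^T = 0.
  by apply/eqP; rewrite -sub_perp -[proj_mx _ _]mul1mx proj_mx_sub.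
(* Both P and Q^T are equal to P *m Q^T. *)
have -> : P = P *m Q^T.
  rewrite -{1}[P]mulmx1 -(@trmx1 R n) -QQ' linearD /= mulmxDr.
  by rewrite (orthogonal_submx PW Q'perp) addr0.
rewrite -{1}[Q^T]mul1mx -PP' mulmxDl.
suff -> : proj_mx (perp V) W *m Q^T = 0 by rewrite addr0.
by rewrite -[LHS]trmxK trmx_mul trmxK (orthogonal_submx QV P'perp) trmx0.
Qed.

Lemma mulmx_tr_oproj_mp_inv (S : 'M[R]_n) : S^T = S -> (W <= S)%MS ->
  S *m (oproj V (perp W) *m mp_inv S)^T = oproj W (perp V).
Proof.
move=> Ssym WS; have [SXS _ _ XSsym] := mp_invP S.
rewrite /oproj -trmx_proj_perp trmxK.
set Q := proj_mx V (perp W); set X := mp_inv S.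
have QS : (Q^T <= S)%MS.
  by rewrite trmx_proj_perp (submx_trans _ WS) // -[proj_mx _ _]mul1mx proj_mx_sub.
have QXS : Q^T *m (X *m S) = Q^T.
  by case/submxP: QS => D ->; rewrite -!mulmxA (mulmxA S) SXS.
rewrite trmx_mul trmxK mulmxA.
have -> : S *m X^T = X *m S by rewrite -XSsym trmx_mul Ssym.
by rewrite -[RHS]trmxK -QXS trmx_mul XSsym trmxK.
Qed.

End Complements.

Lemma inS_oproj (n : nat) (V U : 'M[R]_n) (y : 'cV[R]_n) : inS V (oproj V U *m y).
Proof. by rewrite /inS /oproj trmx_mul trmxK proj_mx_sub. Qed.

Lemma sym_inj_submx (n : nat) (W S : 'M[R]_n) : S^T = S -> (S <= W)%MS ->
  (forall x : 'cV[R]_n, inS W x -> S *m x = 0 -> x = 0) -> (W <= S)%MS.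
Proof.
move=> Ssym SW Sinj.
have WK0 : (W :&: kermx S = 0)%MS.
  apply: row_capmx_eq0 => // u uW /sub_kermxP uS.
  apply: trmx_inj; rewrite trmx0; apply: Sinj; first by rewrite /inS trmxK.
  by rewrite -{1}Ssym -trmx_mul uS trmx0.
have := rank_leq_col (W + kermx S)%MS.
rewrite mxrank_disjoint_sum // mxrank_ker => rkW.
have := rank_leq_col S.
rewrite -(mxrank_leqif_sup SW).2 eqn_leq mxrankS //=.
lia.
Qed.

End LinearAlgebra.

Lemma measurable_forall_ord d (T : measurableType d) (n : nat) (P : 'I_n -> set T) :
  (forall i, measurable (P i)) -> measurable [set t | forall i, P i t].
Proof.
move=> mP; have -> : [set t | forall i, P i t] = \bigcap_(i in [set: 'I_n]) P i.
  by apply/seteqP; split => [t Pt i _|t Pt i]; [exact: Pt | exact: Pt].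
by apply: fin_bigcap_measurable => // i _; exact: mP.
Qed.

Section BorelVectors.
Variables (R : realType) (n : nat).
Local Notation X := (Rn R n).

Lemma continuous_measurable_fun (f : 'cV[R]_n -> R) : continuous f ->
  measurable_fun setT (f : X -> R).
Proof.
move=> /continuousP fcont.
apply: (measurability _ (RGenOpens.measurableE R)).
move=> _ [_ [a [b ->]] <-]; rewrite setTI; apply: sub_sigma_algebra.
exact/fcont/interval_open.
Qed.

Lemma measurable_coord i j : measurable_fun setT (fun x : X => x i j).
Proof. exact: continuous_measurable_fun (@coord_continuous _ _ _ i j). Qed.

Lemma measurable_mulmx_coord (B : 'M[R]_n) i :
  measurable_fun setT (fun x : X => (B *m x) i 0).
Proof.
under eq_fun do rewrite mxE.
by apply: measurable_sum => k; apply: measurable_funM => //; exact: measurable_coord.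
Qed.

(* Open boxes with rational centre and radius form a countable basis of the
   topology of R^n; it is what makes coordinatewise measurability suffice. *)
Definition rat_box (cr : {ffun 'I_n -> rat} * rat) : set 'cV[R]_n :=
  [set y | forall i, `|y i 0 - ratr (cr.1 i)| < ratr cr.2].

Lemma open_rat_box (U : set 'cV[R]_n) (x : 'cV[R]_n) : open U -> U x ->
  exists cr, rat_box cr x /\ rat_box cr `<=` U.
Proof.
move=> oU Ux.
have /nbhs_ballP [e e0 eU] : nbhs x U by rewrite nbhsE; exists U.
have /rat_in_itvoo [r] : 0 < e / 2 by rewrite divr_gt0.
rewrite in_itv /= => /andP[r0 re].
have /fin_all_exists [c xc] : forall i : 'I_n,
    exists q : rat, ratr q \in `](x i 0 - ratr r), (x i 0 + ratr r)[.
  move=> i; apply: rat_in_itvoo.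
  by rewrite ltrBlDr -addrA ltrDl -mulr2n mulrn_wgt0.
exists (finfun c, r); split => [i|y yc] /=.
  by have := xc i; rewrite ffunE in_itv /= ltr_distlC.
apply: eU; split => // i j; rewrite (ord1 j) /ball /=.
have := yc i; have := xc i; rewrite ffunE in_itv /= !ltr_distlC.
move=> /andP[? ?] /andP[? ?]; move: e0 => /= e0; apply/andP; split; lra.
Qed.

Lemma measurable_fun_coord d (T : measurableType d) (F : T -> X) :
  (forall i, measurable_fun setT (fun t => F t i 0)) -> measurable_fun setT F.
Proof.
move=> mF; apply: (@measurability _ _ _ _ setT F open) => //.
move=> _ [U oU <-]; rewrite setTI.
pose B k := if unpickle k is Some cr then
  if `[< rat_box cr `<=` U >] then F @^-1` rat_box cr else set0 else set0.
have -> : F @^-1` U = \bigcup_k B k.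
  apply/seteqP; split => [t Ut|t [k _]] /=.
    have [cr [crt crU]] := open_rat_box oU Ut.
    by exists (pickle cr) => //; rewrite /B pickleK asboolT.
  rewrite /B; case: unpickle => [cr|//]; case: asboolP => // crU.
  exact: crU.
apply: bigcupT_measurable => k; rewrite /B.
case: unpickle => [cr|//]; case: asboolP => // _.
apply: measurable_forall_ord => i.
have -> : (fun t => is_true (`|F t i 0 - ratr (cr.1 i)| < ratr cr.2)) =
    (fun t => F t i 0) @^-1` `](ratr (cr.1 i) - ratr cr.2), (ratr (cr.1 i) + ratr cr.2)[.
  by apply/seteqP; split => t /=; rewrite in_itv /= ltr_distl.
by rewrite -[X in measurable X]setTI; apply: mF => //; exact: measurable_itv.
Qed.

Lemma measurable_notinS (S : 'M[R]_n) : measurable [set x : X | ~~ inS S x].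
Proof.
have -> : [set x : X | ~~ inS S x] =
    ~` [set x : X | forall j, ((cokermx S)^T *m x) j 0 = 0].
  apply/seteqP; split => x /=;
    rewrite /inS submxE -[x^T *m _]trmxK [(x^T *m _)^T]trmx_mul trmxK trmx_eq0.
  - by move=> /eqP Cx0 Cx0'; apply/Cx0/colP => j; rewrite Cx0' mxE.
  - by move=> Cx0; apply/eqP => /colP Cx0'; apply: Cx0 => j; rewrite Cx0' mxE.
apply/measurableC/measurable_forall_ord => j.
rewrite -[X in measurable X]setTI.
exact: (measurable_mulmx_coord (cokermx S)^T j measurableT (measurable_set1 0)).
Qed.

End BorelVectors.

Lemma outer_mxE (R : pzSemiRingType) (m q : nat) (u : 'cV[R]_m) (v : 'cV[R]_q) i j :
  (u *m v^T) i j = u i 0 * v j 0.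
Proof. by rewrite !mxE big_ord1 !mxE. Qed.

Section SquareIntegrable.
Variables (d : measure_display) (T : measurableType d) (R : realType).
Variable mu : {measure set T -> \bar R}.

Definition square_integrable (f : T -> R) : Prop :=
  measurable_fun setT f /\ mu.-integrable setT (fun x => (f x ^+ 2)%:E).

Definition L2 (m : nat) (F : T -> 'cV[R]_m) : Prop :=
  forall i, square_integrable (fun x => F x i 0).

Lemma square_integrable_mul f g : square_integrable f -> square_integrable g ->
  mu.-integrable setT (EFin \o (fun x => f x * g x)).
Proof.
move=> [mf if2] [mg ig2].
apply: le_integrable (integrableD measurableT if2 ig2) => //.
  exact/measurable_EFinP/measurable_funM.
move=> x _ /=; rewrite lee_fin normrM [`|_ + _|]ger0_norm ?addr_ge0 ?sqr_ge0 //.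
rewrite -(real_normK (num_real (f x))) -(real_normK (num_real (g x))).
have := normr_ge0 (f x); have := normr_ge0 (g x).
move: `|f x| `|g x| => a b; nra.
Qed.

Lemma square_integrable0 : square_integrable (fun _ => 0).
Proof.
split => //; apply: (eq_integrable _ (cst 0%E)) => //; last exact: integrable0.
by move=> x _; rewrite expr0n.
Qed.

Lemma square_integrableD f g : square_integrable f -> square_integrable g ->
  square_integrable (fun x => f x + g x).
Proof.
move=> [mf if2] [mg ig2]; split; first exact: measurable_funD.
have i2 : mu.-integrable setT (fun x => (2 * f x ^+ 2 + 2 * g x ^+ 2)%:E).
  apply: (eq_integrable _ (fun x => 2%:E * (f x ^+ 2)%:E + 2%:E * (g x ^+ 2)%:E)%E).
  - exact: measurableT.
  - by move=> x _; rewrite -!EFinM -EFinD.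
  - by apply: integrableD => //; exact: integrableZl.
apply: le_integrable i2 => //.
  by apply/measurable_EFinP; apply: measurable_funM; apply: measurable_funD.
move=> x _ /=; rewrite lee_fin ger0_norm ?sqr_ge0 // ger0_norm; last first.
  by rewrite addr_ge0 // mulr_ge0 // sqr_ge0.
rewrite -subr_ge0.
have -> : 2 * f x ^+ 2 + 2 * g x ^+ 2 - (f x + g x) ^+ 2 = (f x - g x) ^+ 2 by ring.
exact: sqr_ge0.
Qed.

Lemma square_integrableZ c f : square_integrable f ->
  square_integrable (fun x => c * f x).
Proof.
move=> [mf if2]; split; first exact: measurable_funM.
apply: (eq_integrable _ (fun x => (c ^+ 2)%:E * (f x ^+ 2)%:E)%E) => //.
  by move=> x _; rewrite -EFinM exprMn.
exact: integrableZl.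
Qed.

Lemma square_integrable_sum (I : Type) (s : seq I) (F : I -> T -> R) :
  (forall i, square_integrable (F i)) ->
  square_integrable (fun x => \sum_(i <- s) F i x).
Proof.
move=> sqF; elim: s => [|i s IHs].
  by under eq_fun do rewrite big_nil; exact: square_integrable0.
by under eq_fun do rewrite big_cons; exact: square_integrableD.
Qed.

Lemma Rintegral_sum (I : Type) (s : seq I) (F : I -> T -> R) :
  (forall i, mu.-integrable setT (EFin \o F i)) ->
  Rintegral mu setT (fun x => \sum_(i <- s) F i x) =
  \sum_(i <- s) Rintegral mu setT (F i).
Proof.
move=> iF; elim: s => [|i s IHs].
  under eq_Rintegral do rewrite big_nil.
  by rewrite big_nil Rintegral_cst // mul0r.
under eq_Rintegral do rewrite big_cons.
rewrite big_cons -IHs RintegralD //.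
apply: (eq_integrable _ (fun x => \sum_(i <- s) (F i x)%:E)%E) => //.
  by move=> x _; rewrite /= sumEFin.
exact: (integrable_sum measurableT s (fun i _ => iF i)).
Qed.

Lemma L2_mulmx (p m : nat) (B : 'M[R]_(p, m)) (F : T -> 'cV[R]_m) :
  L2 F -> L2 (fun x => B *m F x).
Proof.
move=> L2F i; under eq_fun do rewrite mxE.
by apply: square_integrable_sum => k; exact: square_integrableZ.
Qed.

Lemma L2D (m : nat) (F G : T -> 'cV[R]_m) :
  L2 F -> L2 G -> L2 (fun x => F x + G x).
Proof.
by move=> L2F L2G i; under eq_fun do rewrite mxE; exact: square_integrableD.
Qed.

Lemma integrable_outer (m q : nat) (F : T -> 'cV[R]_m) (G : T -> 'cV[R]_q) i j :
  L2 F -> L2 G -> mu.-integrable setT (EFin \o (fun x => (F x *m (G x)^T) i j)).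
Proof.
by move=> L2F L2G; under eq_fun do rewrite outer_mxE; exact: square_integrable_mul.
Qed.

Lemma measurable_outer (m q : nat) (F : T -> 'cV[R]_m) (G : T -> 'cV[R]_q) i j :
  L2 F -> L2 G -> measurable_fun setT (fun x => (F x *m (G x)^T) i j).
Proof.
by move=> L2F L2G; have /integrableP [/measurable_EFinP] := integrable_outer i j L2F L2G.
Qed.

Lemma mx_integral_tr (p q : nat) (H : T -> 'M[R]_(p, q)) :
  mx_integral mu (fun x => (H x)^T) = (mx_integral mu H)^T.
Proof.
by apply/matrixP => i j; rewrite !mxE; under eq_Rintegral do rewrite mxE.
Qed.

Lemma mx_integral_mull (p m q : nat) (B : 'M[R]_(p, m)) (F : T -> 'cV[R]_m)
    (G : T -> 'cV[R]_q) : L2 F -> L2 G ->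
  mx_integral mu (fun x => (B *m F x) *m (G x)^T) =
  B *m mx_integral mu (fun x => F x *m (G x)^T).
Proof.
move=> L2F L2G; apply/matrixP => i j; rewrite !mxE.
under eq_Rintegral do rewrite outer_mxE mxE mulr_suml.
rewrite Rintegral_sum => [|k]; last first.
  under eq_fun do rewrite -mulrA -outer_mxE.
  apply: (eq_integrable _ (fun x => (B i k)%:E * ((F x *m (G x)^T) k j)%:E)%E) => //.
  exact/integrableZl/integrable_outer.
apply: eq_bigr => k _; rewrite mxE.
under eq_Rintegral do rewrite -mulrA -outer_mxE.
by rewrite RintegralZl //; exact: integrable_outer.
Qed.

Lemma mx_integral_mulr (p m q : nat) (B : 'M[R]_(p, q)) (F : T -> 'cV[R]_m)
    (G : T -> 'cV[R]_q) : L2 F -> L2 G ->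
  mx_integral mu (fun x => F x *m (B *m G x)^T) =
  mx_integral mu (fun x => F x *m (G x)^T) *m B^T.
Proof.
move=> L2F L2G.
under eq_fun do rewrite -[_ *m _]trmxK trmx_mul trmxK.
rewrite mx_integral_tr mx_integral_mull // trmx_mul -mx_integral_tr.
by under eq_fun do rewrite trmx_mul trmxK.
Qed.

Lemma mx_integral_addr (m q : nat) (F : T -> 'cV[R]_m) (G H : T -> 'cV[R]_q) :
  L2 F -> L2 G -> L2 H ->
  mx_integral mu (fun x => F x *m (G x + H x)^T) =
  mx_integral mu (fun x => F x *m (G x)^T) + mx_integral mu (fun x => F x *m (H x)^T).
Proof.
move=> L2F L2G L2H; apply/matrixP => i j; rewrite !mxE.
under eq_Rintegral do rewrite linearD mulmxDr mxE.
by rewrite RintegralD //; exact: integrable_outer.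
Qed.

End SquareIntegrable.

Section NullSet.
Variables (d : measure_display) (T : measurableType d) (R : realType).
Variables (mu : {measure set T -> \bar R}) (N : set T).
Hypotheses (mN : measurable N) (muN0 : mu N = 0%E).

Lemma integral_eq_off_null (f g : T -> \bar R) : (forall x, ~ N x -> f x = g x) ->
  measurable_fun setT f -> measurable_fun setT g ->
  (\int[mu]_x f x = \int[mu]_x g x)%E.
Proof.
move=> fg mf mg; apply: ae_eq_integral => //.
exists N; split => // x /= fgx; apply: contrapT => Nx; apply: fgx => _.
exact: fg.
Qed.

Lemma Rintegral_eq_off_null (f g : T -> R) : (forall x, ~ N x -> f x = g x) ->
  measurable_fun setT f -> measurable_fun setT g ->
  Rintegral mu setT f = Rintegral mu setT g.
Proof.
move=> fg mf mg; rewrite /Rintegral; congr fine.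
apply: integral_eq_off_null.
- by move=> x /fg /= ->.
- exact/measurable_EFinP.
- exact/measurable_EFinP.
Qed.

Lemma integrable_eq_off_null (f g : T -> R) : (forall x, ~ N x -> f x = g x) ->
  measurable_fun setT f -> mu.-integrable setT (EFin \o g) ->
  mu.-integrable setT (EFin \o f).
Proof.
move=> fg mf /integrableP [mg ig]; apply/integrableP; split.
  exact/measurable_EFinP.
rewrite (integral_eq_off_null (g := fun x => `|(EFin \o g) x|%E)) //.
- by move=> x /fg /= ->.
- by apply: measurableT_comp => //; exact/measurable_EFinP.
- exact: measurableT_comp.
Qed.

End NullSet.

Section SecondMoment.
Variables (R : realType) (n : nat).
Local Notation X := (Rn R n).

Lemma sqnorm_ge0 (x : 'cV[R]_n) : 0 <= sqnorm x.
Proof. by rewrite sumr_ge0 // => i _; rewrite -expr2 sqr_ge0. Qed.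

Lemma sqr_coord_le_sqnorm (x : 'cV[R]_n) i : x i 0 ^+ 2 <= sqnorm x.
Proof.
rewrite /sqnorm /dotv (bigD1 i) //= -expr2 lerDl sumr_ge0 // => j _.
by rewrite -expr2 sqr_ge0.
Qed.

Lemma sqnorm_eq0 (x : 'cV[R]_n) : sqnorm x = 0 -> x = 0.
Proof.
move=> x0; apply: trmx_inj; rewrite trmx0; apply: mulmx_tr_self_eq0; rewrite trmxK.
apply/rowP => i; rewrite (ord1 i) !mxE -[RHS]x0.
by apply: eq_bigr => j _; rewrite !mxE.
Qed.

Lemma measurable_sqnorm d (T : measurableType d) (F : T -> X) :
  (forall i, measurable_fun setT (fun t => F t i 0)) ->
  measurable_fun setT (fun t => sqnorm (F t)).
Proof. by move=> mF; apply: measurable_sum => i; exact: measurable_funM. Qed.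

Section L2Rn.
Variables (d : measure_display) (T : measurableType d).
Variable mu : {measure set T -> \bar R}.

Lemma L2_sqnorm (F : T -> X) : (forall i, measurable_fun setT (fun t => F t i 0)) ->
  (\int[mu]_x (sqnorm (F x))%:E < +oo)%E -> L2 mu F.
Proof.
move=> mF Ffin i; split => //.
have mS : measurable_fun setT (fun x => (sqnorm (F x))%:E).
  exact/measurable_EFinP/measurable_sqnorm.
have iS : mu.-integrable setT (fun x => (sqnorm (F x))%:E).
  apply/integrableP; split => //; apply: le_lt_trans Ffin.
  apply: ge0_le_integral => //; first exact: measurableT_comp.
  by move=> x _; rewrite /= ger0_norm // sqnorm_ge0.
apply: le_integrable iS => //; first exact/measurable_EFinP/measurable_funM.
move=> x _ /=; rewrite lee_fin !ger0_norm ?sqnorm_ge0 ?sqr_ge0 //.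
exact: sqr_coord_le_sqnorm.
Qed.

Lemma sqnorm_integral_lt_oo (F : T -> X) : L2 mu F ->
  (\int[mu]_x (sqnorm (F x))%:E < +oo)%E.
Proof.
move=> L2F.
have mS : measurable_fun setT (fun x => (sqnorm (F x))%:E).
  by apply/measurable_EFinP/measurable_sqnorm => i; case: (L2F i).
have iS : mu.-integrable setT (fun x => (sqnorm (F x))%:E).
  apply: (eq_integrable _ (fun x => \sum_(i < n) (F x i 0 ^+ 2)%:E)%E) => //.
    by move=> x _; rewrite sumEFin.
  exact: (integrable_sum measurableT _ (fun i _ => (L2F i).2)).
move/integrableP: iS => [_]; apply: le_lt_trans.
apply: ge0_le_integral => //.
- by move=> x _; rewrite lee_fin sqnorm_ge0.
- exact: measurableT_comp.
- by move=> x _; exact: lee_abs.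
Qed.

End L2Rn.
End SecondMoment.

Section Pushforward.
Variables (R : realType) (n : nat).
Local Notation X := (Rn R n).
Variable mu : {measure set X -> \bar R}.

Lemma measurable_mfun_coord (F : {mfun X >-> X}) i :
  measurable_fun setT (fun x => F x i 0).
Proof. exact: measurableT_comp (measurable_coord i 0) (measurable_funPT F). Qed.

Lemma integral_push_sqnorm (F : {mfun X >-> X}) :
  (\int[push mu F]_y (sqnorm (y : 'cV[R]_n))%:E = \int[mu]_x (sqnorm (F x))%:E)%E.
Proof.
have := ge0_integral_pushforward (measurable_funPT F) mu
  (f := fun y : X => (sqnorm (y : 'cV[R]_n))%:E) measurableT.
rewrite preimage_setT => <- //.
- by apply/measurable_EFinP/measurable_sqnorm => i; exact: measurable_coord.
- by move=> y _; rewrite lee_fin sqnorm_ge0.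
Qed.

Lemma P2_L2 (W : 'M[R]_n) : P2 W mu -> L2 mu (fun x : X => (x : 'cV[R]_n)).
Proof. by case=> _ _ ?; apply: L2_sqnorm => // i; exact: measurable_coord. Qed.

Lemma P2_push_L2 (V : 'M[R]_n) (F : {mfun X >-> X}) : P2 V (push mu F) -> L2 mu F.
Proof.
case=> _ _ Ffin; apply: L2_sqnorm; first exact: measurable_mfun_coord.
by rewrite -integral_push_sqnorm.
Qed.

Lemma L2_push_P2 (W V : 'M[R]_n) (F : {mfun X >-> X}) :
  mu setT = 1%E -> mu [set x : X | ~~ inS W x] = 0%E ->
  (forall x, inS W x -> inS V (F x)) -> L2 mu F -> P2 V (push mu F).
Proof.
move=> mu1 muW0 FWV L2F; split.
- by rewrite pushE /pushforward preimage_setT.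
- apply/eqP; rewrite eq_le measure_ge0 andbT -muW0 pushE /pushforward.
  apply: le_measure; rewrite ?inE; last 2 first.
  + exact: measurable_notinS.
  + by move=> x /= /negP FxV; apply/negP => /FWV.
  by rewrite -[X in measurable X]setTI; exact: measurable_funPT (measurable_notinS V).
- by rewrite integral_push_sqnorm; exact: sqnorm_integral_lt_oo.
Qed.

Lemma is_coupling_graph (F : {mfun X >-> X}) :
  is_coupling mu (push mu F) (push mu (graph_map F)).
Proof.
move=> A mA; rewrite !pushE /pushforward; split; congr (mu _);
  by apply/seteqP; split => x /=; rewrite /graph_map /=; tauto.
Qed.

Lemma mx_integral_push_graph (F : {mfun X >-> X}) :
  L2 mu (fun x : X => (x : 'cV[R]_n)) -> L2 mu F ->
  mx_integral (push mu (graph_map F)) (fun p => (p.1 : 'cV[R]_n) *m (p.2 : 'cV[R]_n)^T)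
  = mx_integral mu (fun x : X => (x : 'cV[R]_n) *m (F x)^T).
Proof.
move=> L2id L2F; apply/matrixP => i j; rewrite !mxE /Rintegral; congr fine.
have mij : measurable_fun setT
    (EFin \o (fun p : X * X => ((p.1 : 'cV[R]_n) *m (p.2 : 'cV[R]_n)^T) i j)).
  apply/measurable_EFinP; under eq_fun do rewrite outer_mxE.
  apply: measurable_funM.
    exact: measurableT_comp (measurable_coord i 0) measurable_fst.
  exact: measurableT_comp (measurable_coord j 0) measurable_snd.
have := @integral_pushforward _ _ X (X * X)%type R _
  (measurable_funPT (graph_map F)) mu setT _ mij.
by rewrite preimage_setT => -> //; exact: integrable_outer.
Qed.

End Pushforward.

Lemma dotvE (R : realType) (n : nat) (x y : 'cV[R]_n) : dotv x y = (x^T *m y) 0 0.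
Proof. by rewrite mxE; apply: eq_bigr => k _; rewrite mxE. Qed.

Section FrameOperator.
Variables (R : realType) (n : nat).
Local Notation X := (Rn R n).
Variable mu : {measure set X -> \bar R}.

Lemma frame_op_sym : (frame_op mu)^T = frame_op mu.
Proof.
rewrite /frame_op -mx_integral_tr.
by under eq_fun do rewrite trmx_mul trmxK.
Qed.

Hypothesis L2id : L2 mu (fun x : X => (x : 'cV[R]_n)).

Lemma frame_op_sub (W : 'M[R]_n) : mu [set x : X | ~~ inS W x] = 0%E ->
  (frame_op mu <= W)%MS.
Proof.
move=> muW0; rewrite submxE; set C := cokermx W.
rewrite -[C]trmxK /frame_op -mx_integral_mulr //; apply/eqP/matrixP => i j.
rewrite !mxE (Rintegral_eq_off_null (measurable_notinS W) muW0 (g := fun _ => 0)).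
- by rewrite Rintegral_cst // mul0r.
- move=> x /negP; rewrite negbK /inS submxE => /eqP xC0.
  by rewrite outer_mxE -[C^T *m x]trmxK trmx_mul trmxK mxE xC0 mxE mulr0.
- exact/measurable_outer/L2_mulmx.
- exact: measurable_cst.
Qed.

Lemma Rintegral_dotv_sqr (x : 'cV[R]_n) :
  Rintegral mu setT (fun y : X => dotv x y ^+ 2) = (x^T *m frame_op mu *m x) 0 0.
Proof.
have -> : x^T *m frame_op mu *m x =
    mx_integral mu (fun y : X => (x^T *m y) *m (x^T *m y)^T).
  rewrite mx_integral_mull ?mx_integral_mulr ?trmxK ?mulmxA //.
  exact: L2_mulmx.
by rewrite mxE; apply: eq_Rintegral => y _; rewrite outer_mxE -expr2 dotvE.
Qed.

Lemma frame_op_inj (W : 'M[R]_n) : prob_frame W mu ->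
  forall x : 'cV[R]_n, inS W x -> frame_op mu *m x = 0 -> x = 0.
Proof.
move=> [A [B [A0 _ frame_bounds]]] x xW Sx0.
have [lower _] := frame_bounds x xW.
have idot : mu.-integrable setT (fun y : X => ((dotv x y) ^+ 2)%:E).
  have [_ ixy] := L2_mulmx x^T L2id 0.
  by apply: eq_integrable ixy => // y _; rewrite dotvE.
have : (\int[mu]_y ((dotv x y) ^+ 2)%:E = 0)%E.
  rewrite -(fineK (integrable_fin_num measurableT idot)) -/(Rintegral _ _ _).
  by rewrite Rintegral_dotv_sqr -mulmxA Sx0 mulmx0 mxE.
move=> int0; rewrite int0 lee_fin pmulr_rle0 // in lower.
by apply: sqnorm_eq0; apply/eqP; rewrite eq_le lower sqnorm_ge0.
Qed.

End FrameOperator.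

Lemma submx_frame_op (R : realType) (n : nat) (W : 'M[R]_n)
    (mu : {measure set Rn R n -> \bar R}) :
  P2 W mu -> prob_frame W mu -> (W <= frame_op mu)%MS.
Proof.
move=> muP2 mu_frame; have L2id := P2_L2 muP2; case: muP2 => _ muW0 _.
apply: (sym_inj_submx (frame_op_sym mu) (frame_op_sub L2id muW0)).
exact: (frame_op_inj L2id mu_frame).
Qed.

Definition add_mulmx (R : realType) (n : nat) (F : {mfun Rn R n >-> Rn R n})
  (B : 'M[R]_n) : Rn R n -> Rn R n := fun x => F x + B *m x.

Lemma measurable_add_mulmx (R : realType) (n : nat) (F : {mfun Rn R n >-> Rn R n})
  (B : 'M[R]_n) : measurable_fun setT (add_mulmx F B).
Proof.
apply: measurable_fun_coord => i; under eq_fun do rewrite mxE.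
exact: measurable_funD (measurable_mfun_coord F i) (measurable_mulmx_coord B i).
Qed.

HB.instance Definition _ (R : realType) (n : nat) (F : {mfun Rn R n >-> Rn R n})
  (B : 'M[R]_n) :=
  isMeasurableFun.Build _ _ (Rn R n) (Rn R n) (add_mulmx F B) (measurable_add_mulmx F B).

Section ObliqueDualGraph.
Variables (R : realType) (n : nat) (W V : 'M[R]_n).
Variable mu : {measure set Rn R n -> \bar R}.
Hypothesis muP2 : P2 W mu.
Local Notation X := (Rn R n).

Lemma oblique_dual_graphE (T : {mfun X >-> X}) :
  oblique_dual W V mu (push mu T) (push mu (graph_map T)) <->
  P2 V (push mu T) /\
  mx_integral mu (fun x : X => (x : 'cV[R]_n) *m (T x)^T) = oproj W (perp V).
Proof.
have L2id := P2_L2 muP2.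
split => [[TP2 _ cross]|[TP2 cross]].
  by rewrite -(mx_integral_push_graph L2id (P2_push_L2 TP2)).
split => //; first exact: is_coupling_graph.
by rewrite (mx_integral_push_graph L2id (P2_push_L2 TP2)).
Qed.

Hypotheses (WVfull : (W + perp V == 1%:M)%MS) (WVdirect : mxdirect (W + perp V)).
Hypothesis mu_frame : prob_frame W mu.

Let dual_op := oproj V (perp W) *m mp_inv (frame_op mu).

Lemma mx_integral_dual_op :
  mx_integral mu (fun x : X => (x : 'cV[R]_n) *m (dual_op *m x)^T) = oproj W (perp V).
Proof.
have L2id := P2_L2 muP2.
rewrite mx_integral_mulr // mulmx_tr_oproj_mp_inv //; first exact: frame_op_sym.
exact: submx_frame_op.
Qed.

Lemma graph_dual_decomposition (T : {mfun X >-> X}) :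
  (forall x : X, inS W x -> inS V (T x)) -> P2 V (push mu T) ->
  mx_integral mu (fun x : X => (x : 'cV[R]_n) *m (T x)^T) = oproj W (perp V) ->
  exists h : {mfun X >-> X},
    [/\ forall x : X, inS W x -> inS V (h x),
        P2 V (push mu h),
        mx_integral mu (fun x : X => (x : 'cV[R]_n) *m (h x : 'cV[R]_n)^T) = 0 &
        forall x : X, inS W x -> T x = dual_op *m x + h x].
Proof.
move=> TWV TP2 cross; have L2id := P2_L2 muP2; have L2T := P2_push_L2 TP2.
pose h : {mfun X >-> X} := add_mulmx T (- dual_op).
have hE x : h x = T x - dual_op *m x by rewrite /= /add_mulmx mulNmx.
have L2h : L2 mu h := L2D L2T (L2_mulmx (- dual_op) L2id).
have hWV x : inS W x -> inS V (h x).
  move=> xW; rewrite hE /inS linearD /= addmx_sub //; first exact: TWV.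
  by rewrite linearN /= eqmx_opp /dual_op -mulmxA; exact: inS_oproj.
exists h; split => // [||x _]; last by rewrite hE addrC subrK.
- by case: muP2 => mu1 muW0 _; exact: (L2_push_P2 mu1 muW0 hWV L2h).
- apply: (addIr (oproj W (perp V))); rewrite add0r -{1}mx_integral_dual_op.
  rewrite -mx_integral_addr //; last exact: L2_mulmx.
  by under eq_fun do rewrite hE subrK.
Qed.

Lemma graph_dual_of_decomposition (T h : {mfun X >-> X}) :
  (forall x : X, inS W x -> inS V (T x)) -> P2 V (push mu h) ->
  mx_integral mu (fun x : X => (x : 'cV[R]_n) *m (h x : 'cV[R]_n)^T) = 0 ->
  (forall x : X, inS W x -> T x = dual_op *m x + h x) ->
  P2 V (push mu T) /\
  mx_integral mu (fun x : X => (x : 'cV[R]_n) *m (T x)^T) = oproj W (perp V).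
Proof.
move=> TWV hP2 cross0 TE; have L2id := P2_L2 muP2; have L2h := P2_push_L2 hP2.
have [mu1 muW0 _] := muP2.
have L2Th : L2 mu (fun x : X => dual_op *m x + h x) := L2D (L2_mulmx dual_op L2id) L2h.
have TE_offW x : ~ [set x : X | ~~ inS W x] x -> T x = dual_op *m x + h x.
  by move=> /negP; rewrite negbK; exact: TE.
have L2T : L2 mu T.
  move=> i; split; first exact: measurable_mfun_coord.
  apply: (integrable_eq_off_null (measurable_notinS W) muW0 _ _ (L2Th i).2).
  - by move=> x /TE_offW ->.
  - by apply: measurable_funM; exact: measurable_mfun_coord.
split; first exact: L2_push_P2 mu1 muW0 TWV L2T.
have -> : mx_integral mu (fun x : X => (x : 'cV[R]_n) *m (T x)^T) =
    mx_integral mu (fun x : X => (x : 'cV[R]_n) *m (dual_op *m x + h x)^T).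
  apply/matrixP => i j; rewrite !mxE.
  apply: (Rintegral_eq_off_null (measurable_notinS W) muW0).
  - by move=> x /TE_offW ->.
  - exact: measurable_outer.
  - exact: measurable_outer.
rewrite mx_integral_addr //; last exact: L2_mulmx.
by rewrite mx_integral_dual_op cross0 addr0.
Qed.

End ObliqueDualGraph.

Theorem corollary4p7 (R : realType) (n : nat) (W V : 'M[R]_n)
  (mu : probability (Rn R n) R) :
  (W + perp V == 1%:M)%MS -> mxdirect (W + perp V) ->
  P2 W mu -> prob_frame W mu ->
  forall T : {mfun Rn R n >-> Rn R n},
    (forall x : Rn R n, inS W x -> inS V (T x)) ->
    (oblique_dual W V mu (push mu T) (push mu (graph_map T))
     <->
     exists h : {mfun Rn R n >-> Rn R n},
       [/\ forall x : Rn R n, inS W x -> inS V (h x),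
           P2 V (push mu h),
           mx_integral mu (fun x : Rn R n =>
             (x : 'cV[R]_n) *m (h x : 'cV[R]_n)^T) = 0 &
           forall x : Rn R n, inS W x ->
             T x = oproj V (perp W) *m mp_inv (frame_op mu) *m x + h x]).
Proof.
move=> WVfull WVdirect muP2 mu_frame T TWV; rewrite oblique_dual_graphE //.
split => [[TP2 cross]|[h [_ hP2 cross0 TE]]].
  exact: graph_dual_decomposition.
exact: graph_dual_of_decomposition hP2 cross0 TE.
Qed.
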